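(* Let $G=(V,E)$ be a finite multigraph with a two-edge-connected subgraph $H=(W,F)$. If a partition $\pi$ of $V$ is such that $G^\pi$ is a cactus, then the sub-quotient $H^{\pi|_W}$ is also a cactus. Similarly, if $G$ is a directed multigraph and $G^\pi$ is an oriented cactus, then $H^{\pi|_W}$ is also an oriented cactus.
   Context: $G^\pi$ identifies the vertices in each block of $\pi$; $\pi|_W$ is the restriction of $\pi$ to $W$. A cactus is a connected multigraph in which every edge belongs to exactly one simple cycle (loops and pairs of parallel edges count as cycles); its cycles are its pads. An oriented cactus is a directed multigraph whose underlying multigraph is a cactus and whose pads are directed cycles. Two-edge-connected: connected with no cut-edge. *)

From mathcomp Require Import all_boot.
Set Implicit Arguments. Unset Strict Implicit. Unset Printing Implicit Defensive.

(* A (multi)graph is given by a vertex set Vs : {set V}, an edge set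
   Es : {set E} and endpoint maps s t : E -> V (edge e joins s e and t e;
   loops s e = t e and parallel edges are allowed).  For undirected notions
   the orientation s -> t is ignored; for directed notions e goes s e -> t e. *)

Section Graphs.
Variables (V E : finType) (s t : E -> V).

Definition adj (Es : {set E}) : rel V :=
  fun x y => [exists e in Es, ((s e == x) && (t e == y)) || ((t e == x) && (s e == y))].

Definition connected_graph (Vs : {set V}) (Es : {set E}) : Prop :=
  forall x y, x \in Vs -> y \in Vs -> connect (adj Es) x y.

Definition two_edge_connected (Vs : {set V}) (Es : {set E}) : Prop :=
  connected_graph Vs Es /\ forall e, e \in Es -> connected_graph Vs (Es :\ e).

(* degree of v in the edge set C (a loop counts twice) *)
Definition deg (C : {set E}) (v : V) : nat :=
  #|[set e in C | s e == v]| + #|[set e in C | t e == v]|.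

Definition outdeg (C : {set E}) (v : V) : nat := #|[set e in C | s e == v]|.
Definition indeg (C : {set E}) (v : V) : nat := #|[set e in C | t e == v]|.

Definition support (C : {set E}) : {set V} := [set v | 0 < deg C v].

Definition simple_cycle (C : {set E}) : Prop :=
  C != set0 /\ (forall v, v \in support C -> deg C v = 2)
  /\ connected_graph (support C) C.

Definition cactus (Vs : {set V}) (Es : {set E}) : Prop :=
  connected_graph Vs Es /\
  forall e, e \in Es ->
    (exists C : {set E}, [/\ C \subset Es, simple_cycle C & e \in C]) /\
    (forall C1 C2 : {set E}, C1 \subset Es -> simple_cycle C1 -> e \in C1 ->
                   C2 \subset Es -> simple_cycle C2 -> e \in C2 -> C1 = C2).

Definition directed_cycle (C : {set E}) : Prop :=
  forall v, v \in support C -> indeg C v = 1 /\ outdeg C v = 1.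

Definition oriented_cactus (Vs : {set V}) (Es : {set E}) : Prop :=
  cactus Vs Es /\
  forall C : {set E}, C \subset Es -> simple_cycle C -> directed_cycle C.

End Graphs.

Definition restr_partition (V : finType) (pi : {set {set V}}) (W : {set V})
  : {set {set V}} := [set B :&: W | B in pi & B :&: W != set0].

(* The quotient G^pi of a graph with edge set Es and ends s,t by a partition
   pi of its vertex set has vertex set pi, edge set Es, and ends
   pblock pi \o s, pblock pi \o t (all edges kept, loops included). *)

From mathcomp Require Import all_boot zify.
Set Implicit Arguments. Unset Strict Implicit. Unset Printing Implicit Defensive.

(* On the edges of H, the quotient by pi|_W is the quotient by pi followed by
   the relabelling B |-> B :&: W, which is injective on the blocks meeting W.
   Hence an edge set C of H has the same degrees, in- and out-degrees and
   connectivity in both quotients, so every pad of H^(pi|_W) is a pad of G^pi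
   with the same orientation.  Connectivity of H passes to its quotient, and a
   walk in H - e between the ends of an edge e, shortened to a path and closed
   by e, gives a cycle through e; its uniqueness is inherited from G^pi. *)

Lemma homo_connect (T U : finType) (e : rel T) (e' : rel U) (f : T -> U) :
  {homo f : x y / e x y >-> e' x y} ->
  {homo f : x y / connect e x y >-> connect e' x y}.
Proof.
move=> fe x _ /connectP[p xp ->]; apply: (path_connect (homo_path fe xp)).
by rewrite -last_map mem_last.
Qed.

Section Multigraph.
Variables (P E : finType) (s t : E -> P).

Lemma adjS (A B : {set E}) : A \subset B -> subrel (adj s t A) (adj s t B).
Proof.
move=> AB x y /existsP[e /andP[eA ends]]; apply/existsP; exists e.
by rewrite (subsetP AB _ eA).
Qed.

Lemma adj_sym (A : {set E}) : symmetric (adj s t A).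
Proof.
move=> x y; apply/existsP/existsP=> -[e /andP[eA ends]]; exists e; rewrite eA /=;
  by case/orP: ends => /andP[-> ->]; rewrite ?orbT.
Qed.

Lemma adj_map (Q : finType) (f : P -> Q) (A : {set E}) :
  {homo f : x y / adj s t A x y >-> adj (f \o s) (f \o t) A x y}.
Proof.
move=> x y /existsP[e /andP[eA ends]]; apply/existsP; exists e; rewrite eA /=.
by case/orP: ends => /andP[/eqP -> /eqP ->]; rewrite !eqxx ?orbT.
Qed.

Lemma connected_quotient (Q : finType) (f : P -> Q) Vs (Es : {set E}) :
  connected_graph s t Vs Es -> connected_graph (f \o s) (f \o t) (f @: Vs) Es.
Proof.
move=> conn _ _ /imsetP[x xV ->] /imsetP[y yV ->].
exact: homo_connect (@adj_map Q f Es) _ _ (conn x y xV yV).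
Qed.

Lemma support_end (C : {set E}) v :
  v \in support s t C -> exists2 e, e \in C & s e = v \/ t e = v.
Proof.
rewrite inE /deg addn_gt0 => /orP[] /card_gt0P[e];
  rewrite inE => /andP[eC /eqP ev]; exists e => //; by [left | right].
Qed.

Definition deg_seq (es : seq E) v :=
  count (fun e => s e == v) es + count (fun e => t e == v) es.

Lemma deg_set_seq (es : seq E) v : uniq es -> deg s t [set:: es] v = deg_seq es v.
Proof.
move=> Ues; rewrite /deg /deg_seq -!size_filter.
by congr (_ + _); rewrite -(card_uniqP (filter_uniq _ Ues)); apply: eq_card => e;
  rewrite !inE mem_filter andbC.
Qed.

(* The degree identity: inner vertices of the path have degree 2 in es, its
   two ends degree 1. *)
Lemma edges_of_path (A : {set E}) x p :
  path (adj s t A) x p -> uniq (x :: p) ->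
  exists es : seq E, [/\ uniq es, {subset es <= A},
    path (adj s t [set:: es]) x p &
    forall w, deg_seq es w + (w == x) + (w == last x p) = 2 * (w \in x :: p)].
Proof.
elim: p x => [|z p IHp] x /=.
  by move=> _ _; exists [::]; split=> // w; rewrite /deg_seq /= inE; case: (w == x).
case/andP=> /existsP[f /andP[fA fxz]] zp /andP[xNzp Uzp].
have [es [Ues esA es_path es_deg]] := IHp z zp Uzp.
have f_ends w : (s f == w) + (t f == w) = (w == x) + (w == z).
  by case/orP: fxz => /andP[/eqP -> /eqP ->]; rewrite ![_ == w]eq_sym // addnC.
have fNes : f \notin es.
  (* x is not on z :: p, so by the degree identity no edge of es meets x *)
  move: xNzp; apply: contra => f_es; have := es_deg x.
  have : 0 < deg_seq es x.
    rewrite /deg_seq addn_gt0 -!has_count.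
    by case/orP: fxz => /andP[/eqP fx _]; apply/orP; [left | right];
      apply/hasP; exists f; rewrite ?fx.
  case: (x \in z :: p) => //.
  by move: (deg_seq es x) (nat_of_bool (x == z)) (nat_of_bool (x == last z p)); lia.
exists (f :: es); split=> [|g||w].
- by rewrite /= fNes.
- by rewrite inE => /predU1P[->|/esA].
- rewrite /= (sub_path _ es_path) ?andbT.
    by apply/existsP; exists f; rewrite set_cons setU11.
  by apply: adjS; rewrite set_cons subsetUr.
- have := es_deg w; have := f_ends w; rewrite /deg_seq /= [w \in x :: _]in_cons.
  have [->|_] := eqVneq w x; first rewrite (negbTE xNzp) ?eqxx.
  all: move: (count _ es) (count _ es) (nat_of_bool (s f == _)).
  all: move: (nat_of_bool (t f == _)) (nat_of_bool (_ == z)) (nat_of_bool (_ == last z p)).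
  all: move=> /= tf bz bl ds dt sf fw esw.
  all: clear -fw esw; lia.
Qed.

Lemma simple_cycle_through (F : {set E}) e : e \in F ->
  connect (adj s t (F :\ e)) (s e) (t e) ->
  exists C : {set E}, [/\ C \subset F, simple_cycle s t C & e \in C].
Proof.
move=> eF /connectP[p0 /shortenP[p p_path Up _] te] {p0}.
have [es [Ues esF es_path es_deg]] := edges_of_path p_path Up.
have eNes : e \notin es by apply/negP=> /esF; rewrite !inE eqxx.
have UC : uniq (e :: es) by rewrite /= eNes.
have degC w : deg s t [set:: e :: es] w = 2 * (w \in s e :: p).
  rewrite deg_set_seq // -es_deg -te /deg_seq /= ![_ == w]eq_sym.
  by move: (count _ es) (count _ es) (nat_of_bool _) (nat_of_bool _) => *; lia.
have eC : e \in [set:: e :: es] by rewrite inE mem_head.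
exists [set:: e :: es]; split=> //.
  by apply/subsetP=> f; rewrite inE => /predU1P[->//|/esF]; rewrite inE => /andP[].
split; first by apply/set0Pn; exists e.
split=> [v|]; first by rewrite inE degC; case: (v \in _).
have from_se v : v \in support s t [set:: e :: es] ->
    connect (adj s t [set:: e :: es]) (s e) v.
  rewrite inE degC; case: (boolP (v \in _)) => // v_p _; move: v_p.
  by apply/path_connect/(sub_path _ es_path)/adjS; rewrite set_cons subsetUr.
move=> x y /from_se sx /from_se sy; apply: connect_trans sy.
by rewrite (sym_connect_sym (adj_sym _)).
Qed.

End Multigraph.

Section Relabel.
Variables (P Q E : finType) (s t : E -> P) (s' t' : E -> Q) (h : P -> Q).
Variables (A : {set P}) (C : {set E}).
Hypothesis h_inj : {in A &, injective h}.
Hypotheses (sA : {in C, forall e, s e \in A}) (tA : {in C, forall e, t e \in A}).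
Hypothesis s'E : {in C, forall e, s' e = h (s e)}.
Hypothesis t'E : {in C, forall e, t' e = h (t e)}.

Lemma relabel_ends (f : E -> P) (f' : E -> Q) x :
  {in C, forall e, f e \in A} -> {in C, forall e, f' e = h (f e)} -> x \in A ->
  [set e in C | f' e == h x] = [set e in C | f e == x].
Proof.
move=> fA f'E xA; apply/setP=> e; rewrite !inE; case: (boolP (e \in C)) => //= eC.
by rewrite f'E // (inj_in_eq h_inj) ?fA.
Qed.

Lemma deg_relabel x : x \in A -> deg s' t' C (h x) = deg s t C x.
Proof.
by move=> xA; rewrite /deg (relabel_ends sA s'E xA) (relabel_ends tA t'E xA).
Qed.

Lemma outdeg_relabel x : x \in A -> outdeg s' C (h x) = outdeg s C x.
Proof. by move=> xA; rewrite /outdeg (relabel_ends sA s'E xA). Qed.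

Lemma indeg_relabel x : x \in A -> indeg t' C (h x) = indeg t C x.
Proof. by move=> xA; rewrite /indeg (relabel_ends tA t'E xA). Qed.

Lemma support_sub : support s t C \subset A.
Proof. by apply/subsetP=> v /support_end[e eC [<-|<-]]; [apply: sA | apply: tA]. Qed.

Lemma mem_support_relabel x : x \in A ->
  (h x \in support s' t' C) = (x \in support s t C).
Proof. by move=> xA; rewrite !inE deg_relabel. Qed.

Lemma support_relabel : support s' t' C = h @: support s t C.
Proof.
apply/setP=> X; apply/idP/imsetP=> [XS|[x xS ->]].
  have [e eC [Xe|Xe]] := support_end XS; subst X.
  - exists (s e); last exact: s'E.
    by rewrite -mem_support_relabel ?sA // -s'E.
  - exists (t e); last exact: t'E.
    by rewrite -mem_support_relabel ?tA // -t'E.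
by rewrite mem_support_relabel // (subsetP support_sub).
Qed.

Lemma connect_relabel x y : x \in A -> y \in A ->
  connect (adj s' t' C) (h x) (h y) -> connect (adj s t C) x y.
Proof.
move=> xA yA.
pose g X := if [pick z in A | h z == X] is Some z then z else x.
have hK : {in A, cancel h g}.
  move=> z zA; rewrite /g; case: pickP => [z' /andP[z'A /eqP]|/(_ z)].
    exact: h_inj.
  by rewrite zA eqxx.
have g_adj : {homo g : X Y / adj s' t' C X Y >-> adj s t C X Y}.
  move=> X Y /existsP[e /andP[eC ends]]; apply/existsP; exists e; rewrite eC /=.
  by case/orP: ends => /andP[/eqP <- /eqP <-];
    rewrite s'E ?t'E // !hK ?sA ?tA // !eqxx ?orbT.
by move/(homo_connect g_adj); rewrite !hK.
Qed.

Lemma simple_cycle_relabel : simple_cycle s' t' C -> simple_cycle s t C.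
Proof.
have S_A := subsetP support_sub.
case=> C0 [deg2 conn]; split=> //; split=> [v vS|x y xS yS].
  by rewrite -deg_relabel ?S_A // deg2 // mem_support_relabel ?S_A.
by apply: connect_relabel; rewrite ?S_A // conn // mem_support_relabel ?S_A.
Qed.

Lemma directed_cycle_relabel : directed_cycle s t C -> directed_cycle s' t' C.
Proof.
move=> dir X; rewrite support_relabel => /imsetP[x xS ->].
have xA := subsetP support_sub x xS.
by rewrite indeg_relabel ?outdeg_relabel //; apply: dir.
Qed.

End Relabel.

Section RestrPartition.
Variables (V : finType) (pi : {set {set V}}) (W : {set V}).
Hypothesis pi_part : partition pi [set: V].

Let R := restr_partition pi W.
Let pi_triv : trivIset pi := partition_trivIset pi_part.

Lemma mem_cover_partition x : x \in cover pi.
Proof. by rewrite (cover_partition pi_part) inE. Qed.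

Lemma trivIset_restr_partition : trivIset R.
Proof.
apply/trivIsetP=> _ _ /imsetP[B1 /setIdP[B1pi _] ->] /imsetP[B2 /setIdP[B2pi _] ->] neq.
have B12 : B1 != B2 by apply: contraNneq neq => ->.
apply/(disjointWl (subsetIl _ W))/(disjointWr (subsetIl _ W)).
exact: (trivIsetP pi_triv).
Qed.

Lemma mem_pblock_setI x : x \in W -> x \in pblock pi x :&: W.
Proof. by move=> xW; rewrite inE mem_pblock mem_cover_partition. Qed.

Lemma pblock_setI_restr_partition x : x \in W -> pblock pi x :&: W \in R.
Proof.
move=> xW; apply/imsetP; exists (pblock pi x) => //.
rewrite inE pblock_mem ?mem_cover_partition //=.
by apply/set0Pn; exists x; apply: mem_pblock_setI.
Qed.

Lemma pblock_restr_partition x : x \in W -> pblock R x = pblock pi x :&: W.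
Proof.
move=> xW; apply: def_pblock trivIset_restr_partition _ (mem_pblock_setI xW).
exact: pblock_setI_restr_partition.
Qed.

Lemma restr_partition_pblock : R = pblock R @: W.
Proof.
apply/setP=> X; apply/idP/imsetP=> [XR|[x xW ->]].
  have /imsetP[B /setIdP[_ /set0Pn[x xBW]] defX] := XR.
  exists x; first by move: xBW; rewrite inE => /andP[].
  by rewrite (def_pblock trivIset_restr_partition XR) // defX.
by rewrite pblock_restr_partition // pblock_setI_restr_partition.
Qed.

Lemma setI_pblock_inj : {in pblock pi @: W &, injective (fun B => B :&: W)}.
Proof.
move=> _ _ /imsetP[x xW ->] /imsetP[y yW ->] /= eqW.
have : x \in pblock pi y :&: W by rewrite -eqW mem_pblock_setI.
by rewrite inE => /andP[/(same_pblock pi_triv)].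
Qed.

End RestrPartition.

Section SubQuotient.
Variables (V E : finType) (s t : E -> V) (W : {set V}) (F : {set E}).
Variable pi : {set {set V}}.
Hypothesis F_ends : forall e, e \in F -> s e \in W /\ t e \in W.
Hypothesis pi_part : partition pi [set: V].

Let R := restr_partition pi W.

Lemma simple_cycle_sub_quotient (C : {set E}) : C \subset F ->
  simple_cycle (pblock R \o s) (pblock R \o t) C ->
  simple_cycle (pblock pi \o s) (pblock pi \o t) C.
Proof.
move=> CF; apply: (simple_cycle_relabel (setI_pblock_inj (W := W) pi_part));
  by move=> e /(subsetP CF)/F_ends[sW tW] /=; rewrite ?imset_f ?pblock_restr_partition.
Qed.

Lemma directed_cycle_sub_quotient (C : {set E}) : C \subset F ->
  directed_cycle (pblock pi \o s) (pblock pi \o t) C ->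
  directed_cycle (pblock R \o s) (pblock R \o t) C.
Proof.
move=> CF; apply: (directed_cycle_relabel (setI_pblock_inj (W := W) pi_part));
  by move=> e /(subsetP CF)/F_ends[sW tW] /=; rewrite ?imset_f ?pblock_restr_partition.
Qed.

Lemma cactus_sub_quotient : two_edge_connected s t W F ->
  cactus (pblock pi \o s) (pblock pi \o t) pi [set: E] ->
  cactus (pblock R \o s) (pblock R \o t) R F.
Proof.
move=> [H_conn H_bridgeless] [_ pads]; split.
  by move: (connected_quotient (f := pblock R) H_conn); rewrite -restr_partition_pblock.
move=> e eF; have [sW tW] := F_ends eF; split.
  apply: (simple_cycle_through eF).
  by apply: homo_connect (H_bridgeless e eF _ _ sW tW); apply: adj_map.
move=> C1 C2 C1F C1pad e1 C2F C2pad e2.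
apply: (pads e (in_setT e)).2; rewrite ?subsetT //; exact: simple_cycle_sub_quotient.
Qed.

End SubQuotient.

Theorem corollary2p15 (V E : finType) (s t : E -> V)
  (W : {set V}) (F : {set E}) (pi : {set {set V}}) :
  (forall e, e \in F -> s e \in W /\ t e \in W) ->
  two_edge_connected s t W F ->
  partition pi [set: V] ->
  (cactus (pblock pi \o s) (pblock pi \o t) pi [set: E] ->
   cactus (pblock (restr_partition pi W) \o s) (pblock (restr_partition pi W) \o t)
          (restr_partition pi W) F) /\
  (oriented_cactus (pblock pi \o s) (pblock pi \o t) pi [set: E] ->
   oriented_cactus (pblock (restr_partition pi W) \o s)
                   (pblock (restr_partition pi W) \o t)
                   (restr_partition pi W) F).
Proof.
move=> F_ends H_2ec pi_part; split; first exact: cactus_sub_quotient.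
case=> G_cactus G_oriented; split; first exact: cactus_sub_quotient.
move=> C CF C_pad; apply: (directed_cycle_sub_quotient F_ends pi_part CF).
exact: G_oriented (subsetT C) (simple_cycle_sub_quotient F_ends pi_part CF C_pad).
Qed.
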